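(* There is an absolute constant $C$ such that the following holds. Let $\delta\in(0,1/2)$ and let $\boldsymbol\theta_1,\boldsymbol\theta_2\in\mathbb R^d$ satisfy $\|\boldsymbol\theta_1-\boldsymbol\theta_2\|_2^2\ge C\sigma^2\log\delta^{-1}$. Let $\hat{\boldsymbol\theta}_1,\hat{\boldsymbol\theta}_2\in\mathbb R^d$ satisfy $\|\hat{\boldsymbol\theta}_b-\boldsymbol\theta_b\|_2\le\sigma$ for $b\in\{1,2\}$, and let $\hat{\mathbf c}=(\hat{\boldsymbol\theta}_1+\hat{\boldsymbol\theta}_2)/2$. Then if $\mathbf x\sim\mathcal N(\boldsymbol\theta_1,\sigma^2\mathbf I_d)$, with probability at least $1-\delta$ we have $(\mathbf x-\hat{\mathbf c})\cdot(\hat{\boldsymbol\theta}_1-\hat{\mathbf c})>0$; and if $\mathbf x\sim\mathcal N(\boldsymbol\theta_2,\sigma^2\mathbf I_d)$, with probability at least $1-\delta$ we have $(\mathbf x-\hat{\mathbf c})\cdot(\hat{\boldsymbol\theta}_1-\hat{\mathbf c})<0$. *)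

From HB Require Import structures.
From mathcomp Require Import all_boot all_order all_algebra.
From mathcomp Require Import all_classical all_reals all_analysis.
Set Implicit Arguments. Unset Strict Implicit. Unset Printing Implicit Defensive.
Import Order.TTheory GRing.Theory Num.Theory.
Local Open Scope classical_set_scope.
Local Open Scope ring_scope.

Definition dotv {R : realType} {d : nat} (u v : 'rV[R]_d) : R :=
  \sum_(i < d) u 0 i * v 0 i.

Definition norm2 {R : realType} {d : nat} (u : 'rV[R]_d) : R :=
  Num.sqrt (dotv u u).

Definition rvec {R : realType} {dT} {T : measurableType dT} {d : nat}
  (X : 'I_d -> T -> R) (w : T) : 'rV[R]_d := \row_(i < d) X i w.

(* Mutual independence of a finite family of real random variables:
   product rule for every choice of Borel sets (taking B_i = setT recovers
   every subfamily). *)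
Definition mutually_independent {R : realType} {dT} {T : measurableType dT}
  (P : probability T R) {d : nat} (X : 'I_d -> T -> R) : Prop :=
  forall B : 'I_d -> set R, (forall i, measurable (B i)) ->
    P (\bigcap_(i in [set: 'I_d]) (X i @^-1` B i)) =
    (\prod_(i < d) P (X i @^-1` B i))%E.

Definition gaussian_vector {R : realType} {dT} {T : measurableType dT}
  (P : probability T R) {d : nat} (X : 'I_d -> T -> R)
  (theta : 'rV[R]_d) (sigma : R) : Prop :=
  (forall i, measurable_fun [set: T] (X i)) /\
  mutually_independent P X /\
  (forall i (A : set R), measurable A ->
     P (X i @^-1` A) = normal_prob (theta 0 i) sigma A).

From HB Require Import structures.
From mathcomp Require Import all_boot all_order all_algebra.
From mathcomp Require Import all_classical all_reals all_analysis.
From mathcomp Require Import measurable_realfun.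
From mathcomp Require Import ring lra.
Import Order.TTheory GRing.Theory Num.Theory HBNNSimple.
Local Open Scope classical_set_scope.
Local Open Scope ring_scope.

(* With c the midpoint of hth1 and hth2 and x ~ N(theta1, sigma^2 I),
   S := <x - c, hth1 - c> is a sum of independent Gaussian terms, so the Chernoff
   bound P[S <= 0] <= exp(- lam E S + lam^2 sigma^2 |hth1 - c|^2 / 2) holds for every
   lam >= 0; it follows from the Gaussian moment generating function and the
   factorisation E[prod_i f_i(X_i)] = prod_i E[f_i(X_i)] for independent coordinates.
   Writing D = theta1 - theta2 and e_b = hth_b - theta_b, one has
   4 E S = |D - e2|^2 - |e1|^2 >= |D|^2/2 - 2 sigma^2 and
   4 |hth1 - c|^2 = |D + e1 - e2|^2 <= 2 |D|^2 + 8 sigma^2, so for lam = 1/(16 sigma^2)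
   the exponent is at most -7|D|^2/(1024 sigma^2) + 9/256 <= - ln (1/delta) as soon as
   |D|^2 >= 512 sigma^2 ln (1/delta), using ln (1/delta) >= 1/2 for delta < 1/2.
   The case x ~ N(theta2, sigma^2 I) is the same statement with 1 and 2 exchanged. *)

Section integral_compM.
Local Open Scope ereal_scope.
Context {R : realType} {d : measure_display} {T : measurableType d}
  (mu : {measure set T -> \bar R}) (Y G : T -> R).
Hypotheses (mY : measurable_fun setT Y) (mG : measurable_fun setT G)
  (G_ge0 : forall x, (0 <= G x)%R).

Lemma ge0_integral_nnsfun_compM (f : {nnsfun R >-> R}) :
  \int[mu]_x (f (Y x) * G x)%:E =
  \sum_(r \in range f) r%:E * \int[mu]_x (\1_(f @^-1` [set r]) (Y x) * G x)%:E.
Proof.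
have mfr r : measurable (f @^-1` [set r]) by exact: measurable_funPTI.
transitivity (\int[mu]_x \sum_(r \in range f)
    (r * (\1_(f @^-1` [set r]) (Y x) * G x))%:E).
  apply: eq_integral => x _; rewrite fsumEFin//; congr EFin.
  rewrite fimfunE fsbig_finite//= fsbig_finite//= mulr_suml.
  by apply: eq_bigr => r _; rewrite mulrA.
rewrite ge0_integral_fsum//; first last.
- move=> r x _; rewrite lee_fin; have [r_ge0|r_lt0] := leP 0%R r.
    by rewrite !mulr_ge0.
  by rewrite preimage_nnfun0// indic0 mul0r mulr0.
- move=> r; apply/measurable_EFinP/measurable_funM => //.
  by apply: measurable_funM => //; exact: measurableT_comp.
apply: eq_fsbigr => r /[!inE] -[z _ fz]; have r_ge0 : (0 <= r)%R by rewrite -fz.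
under eq_integral do rewrite EFinM.
rewrite ge0_integralZl_EFin//.
- by move=> x _; rewrite lee_fin mulr_ge0.
- by apply/measurable_EFinP/measurable_funM => //; exact: measurableT_comp.
Qed.

Lemma ge0_integral_compM_approx (phi : R -> R)
    (mphi : measurable_fun [set: R] (EFin \o phi)) :
    (forall x, 0 <= phi x)%R ->
  \int[mu]_x (phi (Y x) * G x)%:E =
  limn (fun n => \int[mu]_x (nnsfun_approx measurableT mphi n (Y x) * G x)%:E).
Proof.
move=> phi_ge0; rewrite -monotone_convergence//.
- apply: eq_integral => x _; apply/esym/cvg_lim => //.
  rewrite EFinM; under eq_fun do rewrite EFinM.
  apply: cvgeM; [by []| |exact: cvg_cst].
  exact: (@cvg_nnsfun_approx _ _ _ _ _ _ mphi (fun y _ => phi_ge0 y) _ Logic.I).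
- by move=> n; apply/measurable_EFinP/measurable_funM => //; exact: measurableT_comp.
- by move=> n x _; rewrite lee_fin mulr_ge0.
- by move=> x _ a b ab; rewrite lee_fin ler_wpM2r//; exact/lefP/nd_nnsfun_approx.
Qed.

End integral_compM.

(* Both sides integrate phi against a measure on R, the G-weighted law of Y; two such
   measures that agree on measurable sets agree on nonnegative integrands. *)
Lemma eq_ge0_integral_compM {R : realType}
    {d1} {T1 : measurableType d1} (mu1 : {measure set T1 -> \bar R}) (Y1 G1 : T1 -> R)
    {d2} {T2 : measurableType d2} (mu2 : {measure set T2 -> \bar R}) (Y2 G2 : T2 -> R) :
    measurable_fun setT Y1 -> measurable_fun setT G1 -> (forall x, 0 <= G1 x) ->
    measurable_fun setT Y2 -> measurable_fun setT G2 -> (forall x, 0 <= G2 x) ->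
    (forall S : set R, measurable S ->
      (\int[mu1]_x (\1_S (Y1 x) * G1 x)%:E = \int[mu2]_x (\1_S (Y2 x) * G2 x)%:E)%E) ->
  forall phi : R -> R, measurable_fun setT phi -> (forall x, 0 <= phi x) ->
  (\int[mu1]_x (phi (Y1 x) * G1 x)%:E = \int[mu2]_x (phi (Y2 x) * G2 x)%:E)%E.
Proof.
move=> mY1 mG1 G1_ge0 mY2 mG2 G2_ge0 eq_indic phi /measurable_EFinP mphi phi_ge0.
rewrite (ge0_integral_compM_approx mu1 _ _ mY1 mG1 G1_ge0 _ mphi)//.
rewrite (ge0_integral_compM_approx mu2 _ _ mY2 mG2 G2_ge0 _ mphi)//.
congr (limn _); apply/funext => n.
have mfr (r : R) : measurable (nnsfun_approx measurableT mphi n @^-1` [set r]).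
  exact: measurable_funPTI.
by rewrite !ge0_integral_nnsfun_compM//; apply: eq_fsbigr => r _; rewrite eq_indic.
Qed.

Lemma measurable_preimageT {d d'} {T : measurableType d} {U : measurableType d'}
    (f : T -> U) (S : set U) :
  measurable_fun setT f -> measurable S -> measurable (f @^-1` S).
Proof. by move=> mf mS; rewrite -[_ @^-1` _]setTI; exact: mf. Qed.

Lemma integral_indic_comp {R : realType} {d} {T : measurableType d}
    (mu : {measure set T -> \bar R}) (Y : T -> R) (S : set R) :
    measurable_fun setT Y -> measurable S ->
  (\int[mu]_w (\1_S (Y w))%:E = mu (Y @^-1` S))%E.
Proof.
move=> mY mS; rewrite -[Y @^-1` S]setIT -integral_indic//.
exact: measurable_preimageT.
Qed.

Lemma expR_mul_normal_pdf {R : realType} (m s t c x : R) : s != 0 ->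
  expR (t * (x - c)) * normal_pdf m s x =
   expR (t * (m - c) + t ^+ 2 * s ^+ 2 / 2) * normal_pdf (m + t * s ^+ 2) s x.
Proof.
move=> s_neq0; rewrite !normal_pdfE// /normal_fun.
rewrite mulrCA -expRD [RHS]mulrCA -expRD; congr (_ * expR _).
have s2_neq0 : s ^+ 2 != 0 by rewrite expf_neq0.
by field.
Qed.

Section normal_expectation.
Context {R : realType}.
Local Open Scope ereal_scope.

Lemma ge0_integral_normal_comp {d} {T : measurableType d} (P : probability T R)
    (Y : T -> R) (m s : R) :
    measurable_fun setT Y ->
    (forall A, measurable A -> P (Y @^-1` A) = normal_prob m s A) ->
  forall phi : R -> R, measurable_fun setT phi -> (forall x, (0 <= phi x)%R) ->
  \int[P]_w (phi (Y w))%:E = \int[lebesgue_measure]_x (phi x * normal_pdf m s x)%:E.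
Proof.
move=> mY lawY phi mphi phi_ge0.
under eq_integral do rewrite -[phi _]mulr1.
apply: (eq_ge0_integral_compM P Y (fun=> 1%R) lebesgue_measure id (normal_pdf m s)) => //.
- exact: measurable_normal_pdf.
- exact: normal_pdf_ge0.
move=> S mS; under eq_integral do rewrite mulr1.
rewrite integral_indic_comp//; transitivity (normal_prob m s S); first exact: lawY.
rewrite /normal_prob [LHS]integral_mkcond epatch_indic.
by apply: eq_integral => x _; rewrite /= -EFinM mulrC.
Qed.

Lemma integral_expR_normal_pdf (m s t c : R) : s != 0%R ->
  \int[lebesgue_measure]_x (expR (t * (x - c)) * normal_pdf m s x)%:E =
  (expR (t * (m - c) + t ^+ 2 * s ^+ 2 / 2))%:E.
Proof.
move=> s_neq0; under eq_integral do rewrite expR_mul_normal_pdf// EFinM.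
rewrite ge0_integralZl_EFin//.
- by rewrite integral_normal_pdf mule1.
- by move=> x _; rewrite lee_fin normal_pdf_ge0.
- by apply/measurable_EFinP; exact: measurable_normal_pdf.
Qed.

Lemma normal_expectation_expR {d} {T : measurableType d} (P : probability T R)
    (Y : T -> R) (m s t c : R) : s != 0%R ->
    measurable_fun setT Y ->
    (forall A, measurable A -> P (Y @^-1` A) = normal_prob m s A) ->
  \int[P]_w (expR (t * (Y w - c)))%:E = (expR (t * (m - c) + t ^+ 2 * s ^+ 2 / 2))%:E.
Proof.
move=> s_neq0 mY lawY.
rewrite (ge0_integral_normal_comp _ _ _ _ mY lawY (fun x => expR (t * (x - c)))).
- exact: integral_expR_normal_pdf.
- apply: measurableT_comp => //; apply: measurable_funM => //.
  exact: measurable_funB.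
- by move=> x; exact: expR_ge0.
Qed.

End normal_expectation.

Lemma prod_indic_bigcap {R : comNzRingType} {I : finType} {T} (A : I -> set T) (x : T) :
  \prod_i \1_(A i) x = \1_(\bigcap_(i in [set: I]) A i) x :> R.
Proof.
have [xA|xA] := boolP (x \in \bigcap_(i in [set: I]) A i).
  rewrite indicE xA; apply: big1 => i _; rewrite indicE mem_set//.
  by move: xA; rewrite inE => /(_ i Logic.I).
rewrite indicE (negbTE xA); move: xA; rewrite notin_setE => xA.
have : (~` \bigcap_(i in [set: I]) A i) x by [].
by rewrite setC_bigcap => -[i _ Ai]; rewrite (bigD1 i)//= indicE memNset// mul0r.
Qed.

Section independent_expectation.
Local Open Scope ereal_scope.
Context {R : realType} {d : measure_display} {T : measurableType d}
  (P : probability T R) {n : nat} (X : 'I_n -> T -> R).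
Hypotheses (mX : forall i, measurable_fun setT (X i))
  (indX : mutually_independent P X).

Definition expectation_factorizes (g : 'I_n -> R -> R) : Prop :=
  \int[P]_w (\prod_i g i (X i w))%:E = \prod_i \int[P]_w (g i (X i w))%:E.

Lemma expectation_factorizes_indic (B : 'I_n -> set R) :
  (forall i, measurable (B i)) -> expectation_factorizes (fun i => \1_(B i)).
Proof.
move=> mB; rewrite /expectation_factorizes.
under eq_integral do rewrite (prod_indic_bigcap (fun i => X i @^-1` B i)).
rewrite integral_indic// ?setIT; last first.
  apply: fin_bigcap_measurable; first exact: finite_finset.
  by move=> i _; exact: measurable_preimageT.
transitivity (\prod_i P (X i @^-1` B i)); first exact: indX.
by apply: eq_bigr => i _; rewrite integral_indic_comp.
Qed.

Lemma expectation_factorizes_update (g : 'I_n -> R -> R) (j : 'I_n) (f : R -> R) :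
    (forall i, measurable_fun setT (g i)) -> (forall i x, (0 <= g i x)%R) ->
    (forall i, \int[P]_w (g i (X i w))%:E \is a fin_num) ->
    (forall S, measurable S ->
       expectation_factorizes (fun i => if i == j then \1_S else g i)) ->
    measurable_fun setT f -> (forall x, (0 <= f x)%R) ->
  expectation_factorizes (fun i => if i == j then f else g i).
Proof.
move=> mg g_ge0 g_fin factor_indic mf f_ge0.
pose G w := (\prod_(i | i != j) g i (X i w))%R.
pose c := fine (\prod_(i | i != j) \int[P]_w (g i (X i w))%:E).
have c_ge0 : (0 <= c)%R.
  by apply: fine_ge0; apply: prode_ge0 => i _; apply: integral_ge0 => w _; rewrite lee_fin.
have cE : c%:E = \prod_(i | i != j) \int[P]_w (g i (X i w))%:E.
  by rewrite fineK// prode_fin_num.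
have mG : measurable_fun setT G.
  rewrite /G (eq_fun (fun w => big_mkcond _ _)).
  apply: measurable_prod => i _; case: (i != j) => //.
  exact: measurableT_comp.
have G_ge0 w : (0 <= G w)%R by apply: prodr_ge0 => i _.
have prod_update (h : R -> R) w :
    (\prod_i (if i == j then h else g i) (X i w) = h (X j w) * G w)%R.
  by rewrite (bigD1 j)//= eqxx; congr (_ * _)%R; apply: eq_bigr => i /negbTE ->.
have Eprod_update (h : R -> R) :
    \prod_i \int[P]_w ((if i == j then h else g i) (X i w))%:E =
    \int[P]_w (h (X j w))%:E * c%:E.
  by rewrite (bigD1 j)//= eqxx cE; congr (_ * _); apply: eq_bigr => i /negbTE ->.
have integralMc (h : R -> R) : measurable_fun setT h -> (forall x, 0 <= h x)%R ->
    \int[P]_w (h (X j w) * c)%:E = \int[P]_w (h (X j w))%:E * c%:E.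
  move=> mh h_ge0; under eq_integral do rewrite EFinM.
  rewrite ge0_integralZr// => [|w _]; last by rewrite lee_fin.
  by apply/measurable_EFinP; exact: measurableT_comp.
rewrite /expectation_factorizes Eprod_update -integralMc//.
under eq_integral do rewrite prod_update.
apply: (eq_ge0_integral_compM P (X j) G P (X j) (fun=> c)) => // S mS.
transitivity (\int[P]_w (\prod_i (if i == j then \1_S else g i) (X i w))%:E).
  by apply: eq_integral => w _; rewrite prod_update.
by rewrite factor_indic// Eprod_update integralMc//; exact: measurable_indic.
Qed.

Lemma expectation_prod_independent (f : 'I_n -> R -> R) :
    (forall i, measurable_fun setT (f i)) -> (forall i x, (0 <= f i x)%R) ->
    (forall i, \int[P]_w (f i (X i w))%:E \is a fin_num) ->
  expectation_factorizes f.
Proof.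
move=> mf f_ge0 f_fin.
(* Starting from indicators, replace them by the f i one coordinate at a time. *)
pose h k (B : 'I_n -> set R) (i : 'I_n) := if (i < k)%N then f i else \1_(B i).
suff factor_h k : (k <= n)%N -> forall B, (forall i, measurable (B i)) ->
    expectation_factorizes (h k B).
  have := factor_h n (leqnn n) (fun=> set0) (fun=> measurable0).
  by congr expectation_factorizes; apply/funext => i; rewrite /h ltn_ord.
elim: k => [_ B mB|k IHk lt_kn B mB].
  have -> : h 0%N B = fun i => \1_(B i) by apply/funext => i; rewrite /h ltn0.
  exact: expectation_factorizes_indic.
pose j := Ordinal lt_kn.
have h_neq_j B' i : i != j -> h k.+1 B' i = h k B' i.
  move=> /eqP i_neq_j; rewrite /h ltnS leq_eqVlt; case: eqP => //= ik.
  by case: i_neq_j; exact: val_inj.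
have -> : h k.+1 B = (fun i => if i == j then f j else h k.+1 B i).
  by apply/funext => i /=; case: eqP => // ->; rewrite /h ltnSn.
apply: expectation_factorizes_update => //.
- by move=> i; rewrite /h; case: ifP => _; [exact: mf|exact: measurable_indic].
- by move=> i x; rewrite /h; case: ifP => _; rewrite ?indicE.
- move=> i; rewrite /h; case: ifP => _ //.
  by rewrite integral_indic_comp// fin_num_measure//; exact: measurable_preimageT.
move=> S mS; have -> : (fun i => if i == j then \1_S else h k.+1 B i) =
    h k (fun i => if i == j then S else B i).
  apply/funext => i /=; case: eqP => [->|/eqP i_neq_j]; first by rewrite /h ltnn eqxx.
  by rewrite h_neq_j// /h (negbTE i_neq_j).
by apply: IHk; [exact: ltnW|move=> i /=; case: eqP].
Qed.

End independent_expectation.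

Section dotv_facts.
Context {R : realType} {n : nat}.
Implicit Types u v : 'rV[R]_n.

Lemma dotvNr u v : dotv u (- v) = - dotv u v.
Proof. by rewrite /dotv -sumrN; apply: eq_bigr => i _; rewrite mxE mulrN. Qed.

Lemma dotvNl u v : dotv (- u) v = - dotv u v.
Proof. by rewrite /dotv -sumrN; apply: eq_bigr => i _; rewrite mxE mulNr. Qed.

Lemma dotvv_ge0 u : 0 <= dotv u u.
Proof. by apply: sumr_ge0 => i _; rewrite -expr2 sqr_ge0. Qed.

Lemma norm2_sqr u : norm2 u ^+ 2 = dotv u u.
Proof. by rewrite sqr_sqrtr// dotvv_ge0. Qed.

Lemma norm2_distC u v : norm2 (u - v) = norm2 (v - u).
Proof. by rewrite /norm2 -opprB dotvNl dotvNr opprK. Qed.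

Definition midpoint u v : 'rV[R]_n := (1 / 2 : R) *: (u + v).

Lemma midpointC u v : midpoint u v = midpoint v u.
Proof. by rewrite /midpoint addrC. Qed.

Lemma subr_midpoint u v : v - midpoint u v = - (u - midpoint u v).
Proof. by apply/rowP => i; rewrite !mxE; lra. Qed.

End dotv_facts.

Section midpoint_geometry.
Context {R : realType} {n : nat} (p q u v : 'rV[R]_n).
Let c := midpoint u v.

Lemma dotv_midpoint_margin :
  dotv (p - q) (p - q) / 2 - dotv (u - p) (u - p) - dotv (v - q) (v - q) <=
  4 * dotv (p - c) (u - c).
Proof.
rewrite /dotv mulr_suml -!sumrB mulr_sumr; apply: ler_sum => i _; rewrite !mxE.
have := sqr_ge0 ((p 0 i - q 0 i) - 2 * (v 0 i - q 0 i)); nra.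
Qed.

Lemma dotv_midpoint_spread :
  4 * dotv (u - c) (u - c) <=
  2 * dotv (p - q) (p - q) + 4 * dotv (u - p) (u - p) + 4 * dotv (v - q) (v - q).
Proof.
rewrite /dotv !mulr_sumr -!big_split /=; apply: ler_sum => i _; rewrite !mxE.
have := sqr_ge0 ((p 0 i - q 0 i) - (u 0 i - p 0 i) + (v 0 i - q 0 i)).
have := sqr_ge0 ((u 0 i - p 0 i) + (v 0 i - q 0 i)).
nra.
Qed.

End midpoint_geometry.

Lemma chernoff_exponent_le {R : realFieldType} (s2 L N E1 E2 m A : R) :
    0 < s2 -> 1 / 2 <= L -> 512 * s2 * L <= N -> E1 <= s2 -> E2 <= s2 ->
    N / 2 - E1 - E2 <= 4 * m -> 4 * A <= 2 * N + 4 * E1 + 4 * E2 ->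
  - (1 / (16 * s2)) * m + (1 / (16 * s2)) ^+ 2 * s2 * A / 2 <= - L.
Proof.
move=> s2_gt0 L_ge N_ge E1_le E2_le m_ge A_le.
have -> : - (1 / (16 * s2)) * m + (1 / (16 * s2)) ^+ 2 * s2 * A / 2 =
    (- 32 * m + A) / (512 * s2) by field; rewrite gt_eqF.
rewrite ler_pdivrMr ?mulr_gt0//.
have : 18 * s2 <= 1280 * s2 * L by nra.
lra.
Qed.

Section gaussian_linear_tail.
Context {R : realType} {dT : measure_display} {T : measurableType dT}
  {P : probability T R} {n : nat} {X : 'I_n -> T -> R} {theta : 'rV[R]_n} {sigma : R}.
Hypotheses (sigma_gt0 : 0 < sigma) (gX : gaussian_vector P X theta sigma).

Lemma measurable_dotv_rvec_le0 (a c : 'rV[R]_n) :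
  measurable [set w | dotv (rvec X w - c) a <= 0].
Proof.
have [mX _] := gX; rewrite -[E in measurable E]setTI -preimage_itvNyc.
apply: (_ : measurable_fun _ _) => //; rewrite /dotv.
under eq_fun do under eq_bigr do rewrite !mxE.
by apply: measurable_sum => i; apply: measurable_funM => //; exact: measurable_funB.
Qed.

Lemma gaussian_dotv_le0 (a c : 'rV[R]_n) (lam : R) : 0 <= lam ->
  (P [set w | (dotv (rvec X w - c) a <= 0)%R] <=
   (expR (- lam * dotv (theta - c) a + lam ^+ 2 * sigma ^+ 2 * dotv a a / 2))%:E)%E.
Proof.
move=> lam_ge0; have [mX [indX lawX]] := gX.
pose f i x := expR ((- lam * a 0 i) * (x - c 0 i)).
have mf i : measurable_fun setT (f i).
  apply: measurableT_comp => //; apply: measurable_funM => //.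
  exact: measurable_funB.
have f_ge0 i x : 0 <= f i x by exact: expR_ge0.
have Ef i : (\int[P]_w (f i (X i w))%:E = (expR ((- lam * a 0 i) * (theta 0 i - c 0 i)
    + (- lam * a 0 i) ^+ 2 * sigma ^+ 2 / 2))%:E)%E.
  exact: normal_expectation_expR (lt0r_neq0 sigma_gt0) (mX i) (lawX i).
have prod_Ef : (\prod_i \int[P]_w (f i (X i w))%:E = (expR (- lam * dotv (theta - c) a
    + lam ^+ 2 * sigma ^+ 2 * dotv a a / 2))%:E)%E.
  under eq_bigr do rewrite Ef.
  rewrite prodEFin -expR_sum /dotv big_split /= !mulr_sumr mulr_suml.
  by congr (expR (_ + _))%:E; apply: eq_bigr => i _; rewrite ?mxE; ring.
have prod_f w : \prod_i f i (X i w) = expR (- lam * dotv (rvec X w - c) a).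
  rewrite /dotv mulr_sumr expR_sum; apply: eq_bigr => i _.
  by rewrite !mxE /f; congr expR; ring.
have mE := measurable_dotv_rvec_le0 a c.
rewrite -[E in P E]setIT -integral_indic//.
(* Chernoff: the indicator of the event is below expR (- lam * dotv (rvec X w - c) a). *)
apply: (@le_trans _ _ (\int[P]_w (\prod_i f i (X i w))%:E)%E).
  apply: ge0_le_integral => //.
  - by apply/measurable_EFinP; exact: measurable_indic.
  - apply/measurable_EFinP; apply: measurable_prod => i _.
    exact: measurableT_comp.
  - move=> w _; rewrite lee_fin prod_f indicE.
    case: (boolP (w \in _)) => [/set_mem /= le0|_]; last exact: expR_ge0.
    by rewrite -expR0 ler_expR mulNr oppr_ge0 mulr_ge0_le0.
by rewrite expectation_prod_independent// ?prod_Ef// => i; rewrite Ef.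
Qed.

End gaussian_linear_tail.

Lemma gaussian_midpoint_side {R : realType} {n : nat} {sigma delta : R}
    {theta1 theta2 hth1 hth2 : 'rV[R]_n}
    {dT : measure_display} {T : measurableType dT} {P : probability T R}
    {X : 'I_n -> T -> R} :
    0 < sigma -> 0 < delta -> delta < 1 / 2 ->
    512 * sigma ^+ 2 * ln delta^-1 <= norm2 (theta1 - theta2) ^+ 2 ->
    norm2 (hth1 - theta1) <= sigma -> norm2 (hth2 - theta2) <= sigma ->
    gaussian_vector P X theta1 sigma ->
  ((1 - delta)%:E <= P [set w | (0 < dotv (rvec X w - midpoint hth1 hth2)
                                         (hth1 - midpoint hth1 hth2))%R])%E.
Proof.
move=> sigma_gt0 delta_gt0 delta_lt sep err1 err2 gX.
set c := midpoint hth1 hth2.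
set L := ln delta^-1.
have deltaE : expR (- L) = delta by rewrite expRN lnK ?invrK// posrE invr_gt0.
have L_ge : 1 / 2 <= L by have := expR_ge1Dx (- L); rewrite deltaE; lra.
have s2_gt0 : 0 < sigma ^+ 2 by rewrite exprn_gt0.
have dotv_le (u : 'rV[R]_n) : norm2 u <= sigma -> dotv u u <= sigma ^+ 2.
  move=> u_le; rewrite -norm2_sqr.
  have : 0 <= norm2 u := sqrtr_ge0 _.
  nra.
pose A := [set w | dotv (rvec X w - c) (hth1 - c) <= 0].
have mA : measurable A := measurable_dotv_rvec_le0 gX (hth1 - c) c.
have PA_le : (P A <= delta%:E)%E.
  have lam_ge0 : 0 <= 1 / (16 * sigma ^+ 2) by rewrite divr_ge0// ltW// mulr_gt0.
  apply: le_trans (gaussian_dotv_le0 sigma_gt0 gX (hth1 - c) c _ lam_ge0) _.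
  rewrite lee_fin -deltaE ler_expR.
  apply: (chernoff_exponent_le _ _ _ _ _ _ _ s2_gt0 L_ge _ (dotv_le _ err1) (dotv_le _ err2)
    (dotv_midpoint_margin _ theta2 _ _) (dotv_midpoint_spread _ _ _ _)).
  by rewrite -norm2_sqr.
have -> : [set w | (0 < dotv (rvec X w - c) (hth1 - c))%R] = ~` A.
  by apply/seteqP; split => w /=; rewrite /A /= ltNge => /negP.
by rewrite probability_setC// EFinB leeB.
Qed.

Theorem mainTheorem16 (R : realType) :
  exists C : R,
  forall (d : nat) (sigma delta : R) (theta1 theta2 hth1 hth2 : 'rV[R]_d),
    0 < sigma ->
    0 < delta -> delta < 1 / 2 ->
    (norm2 (theta1 - theta2)) ^+ 2 >= C * sigma ^+ 2 * ln (delta^-1) ->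
    norm2 (hth1 - theta1) <= sigma ->
    norm2 (hth2 - theta2) <= sigma ->
    let hc := (1 / 2 : R) *: (hth1 + hth2) in
    forall (dT : measure_display) (T : measurableType dT) (P : probability T R)
           (X : 'I_d -> T -> R),
      (gaussian_vector P X theta1 sigma ->
         (P [set w | (0 < dotv (rvec X w - hc) (hth1 - hc))%R] >= (1 - delta)%:E)%E) /\
      (gaussian_vector P X theta2 sigma ->
         (P [set w | (dotv (rvec X w - hc) (hth1 - hc) < 0)%R] >= (1 - delta)%:E)%E).
Proof.
exists 512 => d sigma delta theta1 theta2 hth1 hth2 sigma_gt0 delta_gt0 delta_lt
  sep err1 err2 hc dT T P X; rewrite {}/hc -/(midpoint hth1 hth2).
split => gX.
  exact: gaussian_midpoint_side sigma_gt0 delta_gt0 delta_lt sep err1 err2 gX.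
set c := midpoint hth1 hth2.
have -> : [set w | (dotv (rvec X w - c) (hth1 - c) < 0)%R] =
    [set w | (0 < dotv (rvec X w - midpoint hth2 hth1) (hth2 - midpoint hth2 hth1))%R].
  by apply/seteqP; split => w /=; rewrite -midpointC subr_midpoint dotvNr oppr_gt0.
rewrite norm2_distC in sep.
exact: gaussian_midpoint_side sigma_gt0 delta_gt0 delta_lt sep err2 err1 gX.
Qed.
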